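(* Let $n\mid(q-1)$, let $b\ge1$, $m\ge1$ be integers with $\gcd(b,n)=1$, let $t\in\{0,\dots,n-1\}$, and let $\ell$ be any integer with $m+1\le\ell\le n-2$. Put $A=\{\alpha^{t},\alpha^{t+b},\dots,\alpha^{t+(m-1)b},\alpha^{t+\ell b}\}$ and let $d_A^{\perp}$ be the minimum distance of the dual of $C_A$. Then $C_A$ is an optimal cyclic $(d_A^{\perp}-1)$-LRC, i.e. an optimal $(d_A^{\perp}-1,2)$-LRC.
   Context: Let $q$ be a prime power and $n\mid(q-1)$, so the set $R_n$ of all $n$-th roots of unity lies in $\mathbb{F}_q$; let $\alpha\in\mathbb{F}_q$ be a primitive $n$-th root of unity. For $Z\subseteq R_n$, $C_Z$ denotes the cyclic code of length $n$ over $\mathbb{F}_q$ with complete defining set $Z$, i.e. the ideal generated by $\prod_{\beta\in Z}(x-\beta)$ in $\mathbb{F}_q[x]/(x^n-1)$, identified with a subspace of $\mathbb{F}_q^n$; it has dimension $n-|Z|$. Locality: for a linear code $C\subseteq\mathbb{F}_q^n$ and integers $r\ge1$, $\delta\ge2$, the $i$-th coordinate has $(r,\delta)$-locality if there is $S_i\subseteq\{1,\dots,n\}$ with $i\in S_i$, $|S_i|\le r+\delta-1$ such that the punctured code $C|_{S_i}$ has minimum distance at least $\delta$; $C$ is an $(r,\delta)$-LRC if every coordinate has $(r,\delta)$-locality; an $r$-LRC is an $(r,2)$-LRC. An $[n,k,d]$ $(r,\delta)$-LRC is optimal if $d=n-k-(\lceil k/r\rceil-1)(\delta-1)+1$ (this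 quantity is always an upper bound on $d$); for $\delta=2$ this reads $d=n-k-\lceil k/r\rceil+2$. *)

From HB Require Import structures.
From mathcomp Require Import all_boot all_order all_algebra all_field.
Set Implicit Arguments. Unset Strict Implicit. Unset Printing Implicit Defensive.
Import Order.TTheory GRing.Theory Num.Theory.
Local Open Scope ring_scope.

Section Codes.
Variables (F : finFieldType) (n : nat).

(* Polynomial code: the ideal generated by g in F[x]/(x^n - 1); elements of
   the quotient ring are represented by polynomials of degree < n, i.e. by
   rVpoly v for v : 'rV_n, and a codeword c is identified with rVpoly c. *)
Definition ideal_code (g : {poly F}) : {set 'rV[F]_n} :=
  [set c | [exists v : 'rV[F]_n, rVpoly c == (rVpoly v * g) %% ('X^n - 1)]].

Definition cyclic_code (Z : {set F}) : {set 'rV[F]_n} :=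
  ideal_code (\prod_(beta in Z) ('X - beta%:P)).

Definition dual_code (C : {set 'rV[F]_n}) : {set 'rV[F]_n} :=
  [set v : 'rV[F]_n | [forall c : 'rV[F]_n, (c \in C) ==> (\sum_(i < n) c ord0 i * v ord0 i == 0)]].

Definition wt (c : 'rV[F]_n) : nat := #|[set i | c ord0 i != 0]|.

(* Minimum distance (minimum nonzero weight); n.+1 for the zero code. *)
Definition mindist (C : {set 'rV[F]_n}) : nat :=
  \big[minn/n.+1]_(c in C | c != 0) wt c.

Definition code_dim (C : {set 'rV[F]_n}) : nat := \dim <<enum C>>%VS.

(* The punctured code C|_S has minimum distance >= delta: every nonzero
   codeword of C|_S (i.e. restriction of some c in C to S) has weight >= delta. *)
Definition punct_mindist_ge (C : {set 'rV[F]_n}) (S : {set 'I_n}) (delta : nat) : Prop :=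
  forall c : 'rV[F]_n, c \in C -> (exists2 j, j \in S & c ord0 j != (0 : F)) ->
    (delta <= #|[set j in S | c ord0 j != 0%R]|)%N.

Definition has_locality (C : {set 'rV[F]_n}) (r delta : nat) (i : 'I_n) : Prop :=
  exists S : {set 'I_n}, [/\ i \in S, (#|S| <= r + delta - 1)%N &
                             punct_mindist_ge C S delta].

Definition is_LRC (C : {set 'rV[F]_n}) (r delta : nat) : Prop :=
  [/\ (0 < r)%N, (2 <= delta)%N & forall i : 'I_n, has_locality C r delta i].

Definition ceil_div (k r : nat) : nat := ((k + r.-1) %/ r)%N.

Definition optimal_LRC (C : {set 'rV[F]_n}) (r delta : nat) : Prop :=
  is_LRC C r delta /\
  ((mindist C)%:Z = n%:Z - (code_dim C)%:Z
      - ((ceil_div (code_dim C) r)%:Z - 1) * (delta%:Z - 1) + 1).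

End Codes.

(* Write beta_0, ..., beta_(k-1) for k distinct n-th roots of unity (the nodes).
   A word lies in the code with defining set {beta_i} iff it vanishes at every
   node, so the check rows (sum_i y_i beta_i^j)_j span the dual (Vandermonde
   interpolation) and the code has dimension n - k.  A k x k minor of the
   check matrix (beta_i^j) is singular iff the code has a nonzero word supported
   on those k columns iff the dual has a nonzero word vanishing on them: the
   code is MDS iff its dual is.  The dual is invariant under cyclic shifts, so
   rotating a minimum-weight dual word puts every coordinate in a repair group
   of size d⊥, giving (d⊥ - 1, 2)-locality.

   For the nodes of the corollary, the BCH bound gives d >= m + 1, the
   Singleton bound d <= m + 2, and a root count for the sparse polynomials
   P(z) + a z^l on n-th roots of unity gives 2 d⊥ >= n - m + 1.  Either the code
   is MDS (d = m + 2, d⊥ >= n - m) or not (d = m + 1, d⊥ <= n - m - 1); with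
   k = n - m - 1 and r = d⊥ - 1 this means ceil(k/r) = 1, resp. 2, and the LRC
   bound is attained in both cases. *)

From HB Require Import structures.
From mathcomp Require Import all_boot all_order all_algebra all_field.
From mathcomp Require Import zify.
Import Order.TTheory GRing.Theory Num.Theory.
Set Implicit Arguments.
Unset Strict Implicit.
Unset Printing Implicit Defensive.
Local Open Scope ring_scope.

(* A vector x supported on at most s indices, carrying pairwise distinct nodes
   a, whose first s power sums vanish is zero: choose the polynomial vanishing
   at all nodes of the support but one and pair it with the power sums. *)
Lemma power_sums_vanish (F : fieldType) (I : finType) (x a : I -> F)
    (s : nat) (J : {set I}) :
  (#|J| <= s)%N -> (forall j, j \notin J -> x j = 0) -> {in J &, injective a} ->
  (forall i, (i < s)%N -> \sum_j x j * a j ^+ i = 0) -> forall j, x j = 0.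
Proof.
move=> cardJ xJ a_inj sums0 j0.
have [j0J|] := boolP (j0 \in J); last exact: xJ.
pose Q := \prod_(j <- enum (J :\ j0)) ('X - (a j)%:P).
have sizeQ : (size Q <= s)%N.
  by rewrite size_prod_XsubC -cardE; move: cardJ; rewrite (cardsD1 j0 J) j0J.
have Q_pairing : \sum_(i < s) Q`_i * (\sum_j x j * a j ^+ i) = \sum_j x j * Q.[a j].
  under eq_bigr do rewrite big_distrr.
  rewrite exchange_big /=; apply: eq_bigr => j _.
  rewrite (horner_coef_wide _ sizeQ) big_distrr /=.
  by apply: eq_bigr => i _; rewrite mulrCA.
have Q_root j : j \in J -> j != j0 -> Q.[a j] = 0.
  move=> jJ jj0; rewrite horner_prod (bigD1_seq j) ?enum_uniq //=.
    by rewrite !hornerE subrr mul0r.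
  by rewrite mem_enum !inE jj0.
have Q_a0 : Q.[a j0] != 0.
  rewrite horner_prod prodf_seq_neq0; apply/allP => j.
  rewrite mem_enum !inE => /andP[jj0 jJ] /=; rewrite !hornerE subr_eq0.
  by apply: contra jj0 => /eqP /a_inj -> //; rewrite eqxx.
have : \sum_j x j * Q.[a j] = x j0 * Q.[a j0].
  rewrite (bigD1 j0) //= big1 ?addr0 // => j jj0.
  have [jJ|jJ] := boolP (j \in J); first by rewrite Q_root ?mulr0.
  by rewrite xJ ?mul0r.
rewrite -Q_pairing big1 => [/esym/eqP|i _]; last by rewrite sums0 ?mulr0.
by rewrite mulf_eq0 (negbTE Q_a0) orbF => /eqP.
Qed.

Lemma left_kernelP (F : fieldType) (p : nat) (M : 'M[F]_p) :
  reflect (exists2 y : 'rV_p, y != 0 & y *m M = 0) (M \notin unitmx).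
Proof.
rewrite -row_free_unit -kermx_eq0.
by apply: (iffP rowV0Pn) => [[y /sub_kermxP yM y0]|[y y0 /sub_kermxP yM]]; exists y.
Qed.

Lemma Vandermonde_unit (F : fieldType) (k : nat) (a : 'rV[F]_k) :
  injective (a 0) -> Vandermonde k a \in unitmx.
Proof.
move=> a_inj; rewrite unitmxE det_Vandermonde unitfE.
apply/prodf_neq0 => i _; apply/prodf_neq0 => j ij.
by rewrite subr_eq0; apply: contraTneq ij => /a_inj ->; rewrite ltnn.
Qed.

Lemma injection_between (T : finType) (A B : {set T}) (p : nat) :
  A \subset B -> (#|A| <= p <= #|B|)%N ->
  exists f : 'I_p -> T, [/\ injective f, A \subset f @: setT & f @: setT \subset B].
Proof.
move=> AB /andP[Ap pB].
have [S [AS SB cardS]] : exists S : {set T}, [/\ A \subset S, S \subset B & #|S| = p].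
  elim: p Ap pB => [|p IH] Ap pB.
    by exists A; split=> //; apply/eqP; rewrite -leqn0.
  have [Ap'|] := leqP #|A| p; last first.
    by move=> pA; exists A; split=> //; apply/eqP; rewrite eqn_leq Ap.
  have [S [AS SB cardS]] := IH Ap' (ltnW pB).
  have [x xBS] : exists x, x \in B :\: S.
    by apply/set0Pn; rewrite -card_gt0 cardsD (setIidPr SB) cardS subn_gt0.
  move: xBS; rewrite inE => /andP[xS xB].
  exists (x |: S); split; rewrite ?cardsU1 ?xS ?cardS //.
    exact: subset_trans AS (subsetUr _ _).
  by rewrite subUset sub1set xB.
exists (fun i => enum_val (cast_ord (esym cardS) i)).
have -> : [set enum_val (cast_ord (esym cardS) i) | i in setT] = S.
  apply/setP => x; apply/imsetP/idP => [[i _ ->]|xS]; first exact: enum_valP.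
  by exists (cast_ord cardS (enum_rank_in xS x)); rewrite ?cast_ordK ?enum_rankK_in.
by split=> // i j /enum_val_inj /cast_ord_inj.
Qed.

(* Among the roots of unity of order N, the sparse polynomial P(z) + a z^l with
   size P <= m <= l < N has fewer than (N + m) / 2 roots: P(z) + a z^l has
   degree at most l, and z^(N-l) P(z) + a has degree below N - l + m. *)
Lemma sparse_poly_roots (F : fieldType) (P : {poly F}) (a : F) (m l N : nat)
    (rs : seq F) :
  (size P <= m)%N -> (m <= l)%N -> (l < N)%N -> uniq rs ->
  (forall z, z \in rs -> z ^+ N = 1 /\ P.[z] + a * z ^+ l = 0) ->
  P != 0 \/ a != 0 -> (2 * size rs < N + m)%N.
Proof.
move=> sizeP ml lN urs roots Pa.
have [a0|a0] := eqVneq a 0.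
  have P0 : P != 0 by case: Pa; rewrite ?a0 ?eqxx.
  have : (size rs < size P)%N.
    apply: max_poly_roots P0 _ urs; apply/allP => z /roots[_].
    by rewrite a0 mul0r addr0 => /eqP.
  lia.
pose g1 : {poly F} := P + a *: 'X^l.
have g1_l : g1`_l = a.
  by rewrite coefD coefZ coefXn eqxx mulr1 nth_default ?add0r // (leq_trans sizeP ml).
have : (size rs < size g1)%N.
  apply: (max_poly_roots _ _ urs); first by apply: contra_neq a0 => g10; rewrite -g1_l g10 coef0.
  by apply/allP => z /roots[_ Pz]; rewrite /root !hornerE Pz.
have size_g1 : (size g1 <= l.+1)%N.
  rewrite (leq_trans (size_polyD _ _)) // geq_max (leq_trans (size_scale_leq _ _));
  by rewrite ?size_polyXn //; lia.
pose g2 : {poly F} := 'X^(N - l) * P + a%:P.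
have g2_0 : g2`_0 = a by rewrite coefD coefXnM coefC; case: ifP; rewrite ?add0r //; lia.
have : (size rs < size g2)%N.
  apply: (max_poly_roots _ _ urs); first by apply: contra_neq a0 => g20; rewrite -g2_0 g20 coef0.
  apply/allP => z /roots[zN Pz]; rewrite /root !hornerE.
  have : z ^+ (N - l) * (P.[z] + a * z ^+ l) = 0 by rewrite Pz mulr0.
  rewrite mulrDr mulrCA -exprD subnK; last exact: ltnW lN.
  by rewrite zN mulr1 => ->.
have size_g2 : (size g2 <= N - l + m)%N.
  rewrite (leq_trans (size_polyD _ _)) // geq_max (leq_trans (size_polyMleq _ _));
  by rewrite ?size_polyXn ?(leq_trans (size_polyC_leq1 _)) //; lia.
lia.
Qed.

Section Distance.
Variables (F : finFieldType) (n : nat).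
Implicit Types (C : {set 'rV[F]_n}) (c v : 'rV[F]_n).

Lemma wt_le_length c : (wt c <= n)%N.
Proof. by rewrite /wt (leq_trans (max_card _)) ?card_ord. Qed.

Definition zero_set v := [set j | v 0 j == 0].

Lemma wt_add_zeros v : (wt v + #|zero_set v|)%N = n.
Proof.
rewrite -[RHS](card_ord n) -(cardsC (zero_set v)) addnC.
by congr (_ + _)%N; apply: eq_card => j; rewrite !inE.
Qed.

Lemma wt_le_zeros v w : (w <= n)%N -> (wt v <= n - w)%N = (w <= #|zero_set v|)%N.
Proof. by move=> wn; have := wt_add_zeros v => wt_zeros; apply/idP/idP => ?; lia. Qed.

Lemma wt_gt0 v : v != 0 -> (0 < wt v)%N.
Proof.
apply: contraNT; rewrite -eqn0Ngt cards_eq0 => /eqP v0; apply/eqP/rowP => j.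
by have := congr1 (fun S : {set 'I_n} => j \in S) v0; rewrite !inE mxE => /negbFE/eqP.
Qed.

Lemma mindist_le C c : c \in C -> c != 0 -> (mindist C <= wt c)%N.
Proof. by move=> cC c0; rewrite /mindist -minEnat -leEnat bigmin_le_cond // cC c0. Qed.

Lemma mindist_ge C w : (w <= n.+1)%N ->
  (forall c, c \in C -> c != 0 -> (w <= wt c)%N) -> (w <= mindist C)%N.
Proof.
move=> wn wC; rewrite /mindist; elim/big_ind: _ => // [x y xw yw|c /andP[]].
  by rewrite leq_min xw yw.
exact: wC.
Qed.

Lemma mindist_leP C w : (w <= n)%N ->
  reflect (exists2 c, c \in C & c != 0 /\ (wt c <= w)%N) (mindist C <= w)%N.
Proof.
move=> wn; apply: (iffP idP) => [dw|[c cC [c0 cw]]]; last first.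
  exact: leq_trans (mindist_le cC c0) cw.
have [/existsP[c /and3P[cC c0 cw]]|none] :=
  boolP [exists c, [&& c \in C, c != 0 & (wt c <= w)%N]]; first by exists c.
suff : (w < mindist C)%N by rewrite ltnNge dw.
apply: mindist_ge => // c cC c0; rewrite ltnNge.
by apply: contra none => cw; apply/existsP; exists c; rewrite cC c0.
Qed.

Lemma dual_codeB C v w : v \in dual_code C -> w \in dual_code C -> v - w \in dual_code C.
Proof.
rewrite !inE => /forallP vC /forallP wC; apply/forallP => c; apply/implyP => cC.
under eq_bigr do rewrite !mxE mulrBr.
by rewrite sumrB (eqP (implyP (vC c) cC)) (eqP (implyP (wC c) cC)) subrr.
Qed.

Lemma dual_support_locality C v :
  v \in dual_code C -> punct_mindist_ge C [set j | v 0 j != 0] 2.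
Proof.
move=> vD c cC [j]; rewrite inE => vj cj; rewrite leqNgt; apply/negP => small.
have only_j i : v 0 i != 0 -> c 0 i != 0 -> i = j.
  move=> vi ci; apply/eqP; apply: contraLR small => ij; rewrite -leqNgt.
  apply: (@leq_trans #|[set i; j]|); first by rewrite cards2 ij.
  apply/subset_leq_card/subsetP => x.
  by rewrite !inE => /orP[]/eqP->; rewrite ?vi ?ci ?vj ?cj.
move: vD; rewrite inE => /forallP/(_ c)/implyP/(_ cC)/eqP.
rewrite (bigD1 j) //= big1 ?addr0 => [/eqP|i ij].
  by rewrite mulf_eq0 (negbTE cj) (negbTE vj).
have [ci|ci] := eqVneq (c 0 i) 0; first by rewrite ci mul0r.
have [vi|vi] := eqVneq (v 0 i) 0; first by rewrite vi mulr0.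
by move: ij; rewrite (only_j i vi ci) eqxx.
Qed.

End Distance.

(* The LRC bound for delta = 2, dimension n - m - 1 and locality r = dd - 1 is
   attained by distance m + 2 when dd >= n - m (one local group suffices), and
   by distance m + 1 when 2 dd > n - m >= dd + 1 (two local groups needed). *)
Lemma lrc_bound_attained (n m d dd : nat) :
  (m.+3 <= n)%N -> (n + 1 <= m + 2 * dd)%N ->
  (d = m.+2 /\ (n - m <= dd)%N) \/ (d = m.+1 /\ (dd <= n - m.+1)%N) ->
  d%:Z = n%:Z - (n - m.+1)%:Z - ((ceil_div (n - m.+1) dd.-1)%:Z - 1) * (2%:Z - 1) + 1.
Proof.
move=> mn ndd [[-> ddn]|[-> ddn]].
  have -> : ceil_div (n - m.+1) dd.-1 = 1%N.
    rewrite /ceil_div (_ : (n - m.+1 + dd.-2 = 1 * dd.-1 + (n - m.+2))%N); last by lia.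
    by rewrite divnMDl ?divn_small; lia.
  lia.
have -> : ceil_div (n - m.+1) dd.-1 = 2%N.
  rewrite /ceil_div (_ : (n - m.+1 + dd.-2 = 2 * dd.-1 + (n - m.+1 - dd))%N); last by lia.
  by rewrite divnMDl ?divn_small; lia.
lia.
Qed.

Lemma horner_rVpoly (R : comNzRingType) (d : nat) (v : 'rV[R]_d) (z : R) :
  (rVpoly v).[z] = \sum_(j < d) v 0 j * z ^+ j.
Proof.
rewrite (horner_coef_wide _ (size_poly _ _)); apply: eq_bigr => j _.
by rewrite coef_rVpoly_ord.
Qed.

Section NodeCode.
Variables (F : finFieldType) (n k : nat) (beta : 'I_k -> F).
Hypotheses (beta_inj : injective beta) (beta_unity : forall i, beta i ^+ n = 1)
  (k_lt_n : (k < n)%N).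
Implicit Types (c v : 'rV[F]_n) (y : 'rV[F]_k) (f : 'I_k -> 'I_n) (z : F).

Let n_gt0 : (0 < n)%N := leq_ltn_trans (leq0n k) k_lt_n.
Let k_le_n : (k <= n)%N := ltnW k_lt_n.

Definition node_set : {set F} := [set beta i | i : 'I_k].
Local Notation C := (cyclic_code n node_set).
Local Notation D := (dual_code C).

Definition eval_word (c : 'rV[F]_n) (z : F) : F := \sum_(j < n) c 0 j * z ^+ j.

Definition check_row (y : 'rV[F]_k) : 'rV[F]_n := \row_j \sum_i y 0 i * beta i ^+ j.

Definition check_minor (f : 'I_k -> 'I_n) : 'M[F]_k := \matrix_(i, p) beta i ^+ f p.

Definition node_vandermonde : 'M[F]_k := Vandermonde k (\row_i beta i).

Lemma eval_wordE c z : eval_word c z = (rVpoly c).[z].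
Proof. by rewrite horner_rVpoly. Qed.

Lemma eval_wordB c c' z : eval_word (c - c') z = eval_word c z - eval_word c' z.
Proof. by rewrite /eval_word -sumrB; apply: eq_bigr => j _; rewrite !mxE mulrBl. Qed.

Lemma eval_word_delta (j : 'I_n) z : eval_word (delta_mx 0 j) z = z ^+ j.
Proof.
rewrite /eval_word (bigD1 j) //= big1 ?addr0 => [|j' j'j]; first by rewrite mxE !eqxx mul1r.
by rewrite mxE (negbTE j'j) andbF mul0r.
Qed.

(* A word lies in the code iff it vanishes at every node: the generator
   prod (X - beta_i) divides a polynomial of degree < n iff all beta_i are roots,
   and reduction modulo X^n - 1 does not affect values at n-th roots of unity. *)
Lemma mem_node_code c : (c \in C) = [forall i, eval_word c (beta i) == 0].
Proof.
have size_rVpoly (c' : 'rV[F]_n) : (size (rVpoly c') <= n)%N := size_poly _ _.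
set g := \prod_(z in node_set) ('X - z%:P).
have g_root i : g.[beta i] = 0.
  by rewrite horner_prod (bigD1 (beta i)) ?imset_f //= !hornerE subrr mul0r.
rewrite inE; apply/existsP/forallP => [[v /eqP cv] i|c_roots].
  have unity_root : ('X^n - 1 : {poly F}).[beta i] = 0.
    by rewrite !hornerE beta_unity subrr.
  set q := rVpoly v * g; have : q.[beta i] = 0 by rewrite hornerM g_root mulr0.
  rewrite eval_wordE cv {1}(divp_eq q ('X^n - 1)) hornerD hornerM unity_root.
  by rewrite mulr0 add0r => ->.
have g_dvd : g %| rVpoly c.
  rewrite /g -big_enum; apply: uniq_roots_dvdp; last by rewrite uniq_rootsE enum_uniq.
  apply/allP => z; rewrite mem_enum => /imsetP[i _ ->].
  by rewrite /root -eval_wordE c_roots.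
have /dvdpP[w cw] := g_dvd.
have g0 : g != 0 by rewrite monic_neq0 // monic_prod_XsubC.
have size_w : (size w <= n)%N.
  have [->|w0] := eqVneq w 0; first by rewrite size_poly0.
  apply: leq_trans (size_rVpoly c); rewrite cw.
  by apply: dvdp_leq; [rewrite mulf_neq0 | exact: dvdp_mulIl].
exists (poly_rV w); rewrite poly_rV_K // -cw modp_small //.
by rewrite size_XnsubC // ltnS size_rVpoly.
Qed.

Lemma check_row_dual y : check_row y \in D.
Proof.
rewrite inE; apply/forallP => c; apply/implyP; rewrite mem_node_code => /forallP c_roots.
under eq_bigr do rewrite mxE big_distrr.
rewrite exchange_big big1 //= => i _.
transitivity (y 0 i * eval_word c (beta i)); last by rewrite (eqP (c_roots i)) mulr0.
by rewrite /eval_word big_distrr; apply: eq_bigr => j _; rewrite mulrCA.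
Qed.

Lemma node_vandermonde_unit : node_vandermonde \in unitmx.
Proof. by apply: Vandermonde_unit => i j; rewrite !mxE; apply: beta_inj. Qed.

Lemma check_row_low y (p : 'I_k) :
  check_row y 0 (widen_ord k_le_n p) = (y *m node_vandermonde^T) 0 p.
Proof. by rewrite !mxE; apply: eq_bigr => i _; rewrite !mxE. Qed.

Lemma check_row0 : check_row 0 = 0.
Proof. by apply/rowP => j; rewrite !mxE big1 // => i _; rewrite mxE mul0r. Qed.

Lemma check_row_eq0 y : check_row y = 0 -> y = 0.
Proof.
move=> y0; have Vt_unit : node_vandermonde^T \in unitmx.
  by rewrite unitmx_tr node_vandermonde_unit.
apply: (can_inj (mulmxK Vt_unit)); rewrite mul0mx; apply/rowP => p.
by rewrite -check_row_low y0 !mxE.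
Qed.

Lemma interpolation (r : 'rV[F]_k) : exists2 c : 'rV[F]_n,
  (forall j : 'I_n, (k <= j)%N -> c 0 j = 0) & forall i, eval_word c (beta i) = r 0 i.
Proof.
set u := r *m invmx node_vandermonde.
have size_u : (size (rVpoly u) <= k)%N := size_poly _ _.
exists (poly_rV (rVpoly u)) => [j kj|i].
  by rewrite mxE nth_default // (leq_trans size_u).
rewrite eval_wordE poly_rV_K ?(leq_trans size_u) // horner_rVpoly.
rewrite -[r](mulmxKV node_vandermonde_unit) -/u mxE.
by apply: eq_bigr => p _; rewrite !mxE.
Qed.

Lemma coordinate_codeword (j : 'I_n) : (k <= j)%N ->
  exists2 c, c \in C & c 0 j = 1 /\ forall j' : 'I_n, j' != j -> (k <= j')%N -> c 0 j' = 0.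
Proof.
move=> kj; have [u u_high u_eval] := interpolation (\row_i beta i ^+ j).
exists (delta_mx 0 j - u).
  rewrite mem_node_code; apply/forallP => i.
  by rewrite eval_wordB eval_word_delta u_eval mxE subrr.
split=> [|j' j'j kj']; rewrite !mxE ?u_high //; first by rewrite !eqxx subr0.
by rewrite (negbTE j'j) andbF subr0.
Qed.

(* The dual code consists exactly of the check rows: a dual word agreeing with
   a check row on the first k coordinates equals it, by orthogonality to the
   coordinate codewords. *)
Lemma dual_is_check_rows v : v \in D -> exists y, v = check_row y.
Proof.
move=> vD; have Vt_unit : node_vandermonde^T \in unitmx.
  by rewrite unitmx_tr node_vandermonde_unit.
set y := (\row_p v 0 (widen_ord k_le_n p)) *m invmx node_vandermonde^T.
exists y; set w := v - check_row y.
have w_entry j : w 0 j = v 0 j - check_row y 0 j by rewrite !mxE.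
have w_low (j : 'I_n) : (j < k)%N -> w 0 j = 0.
  move=> jk; have -> : j = widen_ord k_le_n (Ordinal jk) by apply: val_inj.
  by rewrite w_entry check_row_low mulmxKV // mxE subrr.
suff w0 : w = 0 by apply/eqP; rewrite -subr_eq0 -/w w0.
apply/rowP => j; rewrite [RHS]mxE; have [jk|kj] := ltnP j k; first exact: w_low.
have [c cC [cj c_high]] := coordinate_codeword kj.
have : w \in D by apply: dual_codeB vD (check_row_dual y).
rewrite inE => /forallP/(_ c)/implyP/(_ cC)/eqP.
rewrite (bigD1 j) //= cj mul1r big1 ?addr0 // => j' j'j.
by have [j'k|kj'] := ltnP j' k; [rewrite w_low ?mulr0 | rewrite c_high ?mul0r].
Qed.

(* The code is the kernel of the evaluation map at the nodes, which is onto
   by interpolation; so its dimension is n - k. *)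
Lemma node_code_dim : code_dim C = (n - k)%N.
Proof.
pose G : 'M[F]_(n, k) := \matrix_(j, i) beta i ^+ j.
pose f : 'Hom('rV[F]_n, 'rV[F]_k) := linfun (mulmxr G).
have fE c : f c = \row_i eval_word c (beta i).
  by rewrite lfunE /=; apply/rowP => i; rewrite !mxE; apply: eq_bigr => j _; rewrite mxE.
have ker_f : <<enum C>>%VS = lker f.
  have mem_ker c : (c \in lker f) = (c \in C).
    rewrite memv_ker fE mem_node_code; apply/eqP/forallP => [/rowP c0 i|c0].
      by have := c0 i; rewrite !mxE => ->.
    by apply/rowP => i; rewrite !mxE; apply/eqP.
  apply/vspaceP => c; apply/idP/idP; last by rewrite mem_ker => cC; rewrite memv_span ?mem_enum.
  by apply/subvP; apply/span_subvP => c'; rewrite mem_enum -mem_ker.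
have img_f : (f @: fullv)%VS = fullv.
  apply/eqP; rewrite eqEsubv subvf /=; apply/subvP => r _.
  have [c _ c_eval] := interpolation r.
  have -> : r = f c by rewrite fE; apply/rowP => i; rewrite mxE c_eval.
  exact: memv_img (memvf _).
rewrite /code_dim ker_f; have := limg_ker_dim f fullv.
by rewrite capfv img_f !dimvf /= !dim_matrix; lia.
Qed.

Lemma eval_word_supported (f : 'I_k -> 'I_n) c z : injective f ->
  (forall j, j \notin f @: setT -> c 0 j = 0) ->
  eval_word c z = \sum_p c 0 (f p) * z ^+ f p.
Proof.
move=> f_inj c_supp; rewrite /eval_word (bigID (mem (f @: setT))) /=.
rewrite [X in _ + X]big1 ?addr0 => [|j /c_supp ->]; last by rewrite mul0r.
rewrite big_imset => [|p q _ _ /f_inj //].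
by apply: eq_bigl => p; rewrite inE.
Qed.

Lemma singular_minor_codeword f : injective f -> check_minor f \notin unitmx ->
  exists2 c, c \in C & c != 0 /\ (wt c <= k)%N.
Proof.
move=> f_inj; rewrite -unitmx_tr => /left_kernelP[x x0 xM].
pose c : 'rV[F]_n := \row_j \sum_p x 0 p * (f p == j)%:R.
have c_f p : c 0 (f p) = x 0 p.
  rewrite mxE (bigD1 p) //= eqxx mulr1 big1 ?addr0 // => p' p'p.
  by rewrite (inj_eq f_inj) (negbTE p'p) mulr0.
have c_supp j : j \notin f @: setT -> c 0 j = 0.
  move=> jf; rewrite mxE big1 // => p _; case: eqP => [fpj|_]; last by rewrite mulr0.
  by move: jf; rewrite -fpj imset_f.
exists c; last split.
- rewrite mem_node_code; apply/forallP => i; rewrite (eval_word_supported _ f_inj c_supp).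
  have := congr1 (fun M : 'rV_k => M 0 i) xM; rewrite !mxE => xM_i.
  by apply/eqP; rewrite -[RHS]xM_i; apply: eq_bigr => p _; rewrite c_f !mxE.
- by apply: contraNneq x0 => c0; apply/eqP/rowP => p; rewrite -c_f c0 !mxE.
- rewrite -(card_ord k) -cardsT -(card_imset _ f_inj); apply: subset_leq_card.
  by apply/subsetP => j; rewrite inE; apply: contraR => /c_supp ->; rewrite eqxx.
Qed.

Lemma singular_minor_dual_word f : injective f -> check_minor f \notin unitmx ->
  exists2 v, v \in D & v != 0 /\ (wt v <= n - k)%N.
Proof.
move=> f_inj /left_kernelP[y y0 yM]; exists (check_row y); first exact: check_row_dual.
split; first by apply: contra_neq y0 => /check_row_eq0.
rewrite wt_le_zeros //.
rewrite -(card_ord k) -cardsT -(card_imset _ f_inj); apply: subset_leq_card.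
apply/subsetP => _ /imsetP[p _ ->]; rewrite inE.
have := congr1 (fun M : 'rV_k => M 0 p) yM; rewrite !mxE => yM_p.
by apply/eqP; rewrite -[RHS]yM_p; apply: eq_bigr => i _; rewrite mxE.
Qed.

Lemma light_codeword_singular_minor c : c \in C -> c != 0 -> (wt c <= k)%N ->
  exists2 f, injective f & check_minor f \notin unitmx.
Proof.
move=> cC c0 ck.
have [f [f_inj supp_f _]] : exists f : 'I_k -> 'I_n,
    [/\ injective f, [set j | c 0 j != 0] \subset f @: setT & f @: setT \subset setT].
  by apply: injection_between; rewrite ?subsetT // cardsT card_ord ck k_le_n.
have c_supp j : j \notin f @: setT -> c 0 j = 0.
  by move=> jf; apply/eqP; apply: contraR jf => cj; apply: (subsetP supp_f); rewrite inE.
exists f => //; rewrite -unitmx_tr; apply/left_kernelP; exists (\row_p c 0 (f p)).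
  apply: contra_neq c0 => x0; apply/rowP => j; rewrite mxE.
  have [/imsetP[p _ ->]|/c_supp //] := boolP (j \in f @: setT).
  by have := congr1 (fun x : 'rV_k => x 0 p) x0; rewrite !mxE.
apply/rowP => i; move: cC; rewrite mem_node_code => /forallP/(_ i)/eqP.
rewrite (eval_word_supported _ f_inj c_supp) => c_i.
by rewrite !mxE -[RHS]c_i; apply: eq_bigr => p _; rewrite !mxE.
Qed.

Lemma light_dual_word_singular_minor v : v \in D -> v != 0 -> (wt v <= n - k)%N ->
  exists2 f, injective f & check_minor f \notin unitmx.
Proof.
move=> vD v0 vw; have [y vy] := dual_is_check_rows vD.
have [f [f_inj _ f_zeros]] : exists f : 'I_k -> 'I_n,
    [/\ injective f, set0 \subset f @: setT & f @: setT \subset zero_set v].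
  by apply: injection_between; rewrite ?sub0set // cards0 /= -wt_le_zeros.
exists f => //; apply/left_kernelP; exists y.
  by apply: contra_neq v0 => y0; rewrite vy y0 check_row0.
apply/rowP => p; have := subsetP f_zeros (f p) (imset_f _ (in_setT p)).
rewrite inE vy mxE => /eqP vfp; rewrite !mxE -[RHS]vfp.
by apply: eq_bigr => i _; rewrite mxE.
Qed.

(* Through the minors: the code has a nonzero word of weight <= k (it is not
   MDS) iff its dual has a nonzero word of weight <= n - k (it is not MDS). *)
Lemma node_code_MDS_dual : (mindist C <= k)%N = (mindist D <= n - k)%N.
Proof.
apply/idP/idP.
  move/(mindist_leP _ k_le_n) => [c cC [c0 ck]].
  have [f f_inj fM] := light_codeword_singular_minor cC c0 ck.
  by apply/(mindist_leP _ (leq_subr k n)); apply: singular_minor_dual_word fM.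
move/(mindist_leP _ (leq_subr k n)) => [v vD [v0 vk]].
have [f f_inj fM] := light_dual_word_singular_minor vD v0 vk.
by apply/(mindist_leP _ k_le_n); apply: singular_minor_codeword fM.
Qed.

(* Singleton bound: the coordinate codeword at position k has weight <= k + 1. *)
Lemma node_code_singleton : (mindist C <= k.+1)%N.
Proof.
have [c cC [c1 c_high]] := coordinate_codeword (leqnn k : (k <= Ordinal k_lt_n)%N).
have c0 : c != 0 by apply: contra_eq_neq c1 => ->; rewrite mxE eq_sym oner_eq0.
apply: leq_trans (mindist_le cC c0) _.
apply: leq_trans (subset_leq_card (_ : _ \subset [set widen_ord k_lt_n p | p : 'I_k.+1])) _.
  apply/subsetP => j; rewrite inE => cj; apply/imsetP.
  have jk : (j < k.+1)%N.
    rewrite ltnS leqNgt; apply: contra cj => kj.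
    have j_ne : j != Ordinal k_lt_n by apply: contraTneq kj => ->; rewrite ltnn.
    by rewrite c_high // ltnW.
  by exists (Ordinal jk); last by apply: val_inj.
by rewrite card_imset ?card_ord // => p q /(congr1 val) /= /val_inj.
Qed.

(* Multiplying the coefficient of each node beta_i by beta_i^s rotates a check
   row by s positions: the dual code is cyclic. *)
Lemma check_row_rotate y (s : nat) (j : 'I_n) :
  check_row (\row_i (y 0 i * beta i ^+ s)) 0 j =
  check_row y 0 (Ordinal (ltn_pmod (s + j) n_gt0)).
Proof.
rewrite !mxE; apply: eq_bigr => i _.
by rewrite mxE -mulrA -exprD /= (expr_mod _ (beta_unity i)).
Qed.

(* The support of a nonzero dual word v, rotated so as to contain a prescribed
   coordinate, is a repair group: the code has (wt v - 1, 2)-locality. *)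
Lemma node_code_locality v : v \in D -> v != 0 -> forall i, has_locality C (wt v).-1 2 i.
Proof.
move=> vD v0 i; have [y vy] := dual_is_check_rows vD.
have /card_gt0P[j] := wt_gt0 v0; rewrite inE => vj.
pose s := (j + n - i)%N.
pose rot (j' : 'I_n) : 'I_n := Ordinal (ltn_pmod (s + j') n_gt0).
have rot_inj : injective rot.
  move=> j1 j2 /(congr1 val) /eqP; rewrite /= eqn_modDl !modn_small // => /eqP.
  exact: val_inj.
have rot_i : rot i = j.
  apply: val_inj; rewrite /= /s subnK ?modnDr ?modn_small //.
  by have := ltn_ord i; lia.
pose w := check_row (\row_i0 (y 0 i0 * beta i0 ^+ s)).
have w_rot j' : w 0 j' = v 0 (rot j') by rewrite check_row_rotate vy.
exists [set j' | w 0 j' != 0]; split.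
- by rewrite inE w_rot rot_i.
- have -> : #|[set j' | w 0 j' != 0]| = wt v.
    rewrite /wt -(card_preimset [set j' | v 0 j' != 0] rot_inj); apply: eq_card => j'.
    by rewrite !inE w_rot.
  by have := wt_gt0 v0; lia.
- exact: dual_support_locality (check_row_dual _).
Qed.

Lemma node_dual_min_word : (0 < k)%N -> exists2 v, v \in D & v != 0 /\ wt v = mindist D.
Proof.
move=> k_gt0; set y1 : 'rV[F]_k := const_mx 1.
have v1_0 : check_row y1 != 0.
  apply: contraTneq (oner_neq0 F) => /check_row_eq0/matrixP/(_ 0 (Ordinal k_gt0)).
  by rewrite /y1 !mxE => /eqP; rewrite oner_eq0.
have dd_n : (mindist D <= n)%N.
  exact: leq_trans (mindist_le (check_row_dual y1) v1_0) (wt_le_length _).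
have /(mindist_leP _ dd_n)[v vD [v0 vw]] := leqnn (mindist D).
by exists v => //; split=> //; apply/eqP; rewrite eqn_leq vw mindist_le.
Qed.

Lemma node_code_LRC : (0 < k)%N -> (2 <= mindist D)%N -> is_LRC C (mindist D).-1 2.
Proof.
move=> k_gt0 dd2; split=> //; first by lia.
have [v vD [v0 <-]] := node_dual_min_word k_gt0.
exact: node_code_locality.
Qed.

End NodeCode.

Definition node_exponent (m l : nat) (i : 'I_m.+1) : nat := if (i < m)%N then (i : nat) else l.

Lemma node_exponent_lt (m l n : nat) (i : 'I_m.+1) :
  (m < l)%N -> (l < n)%N -> (node_exponent l i < n)%N.
Proof. by have := ltn_ord i; rewrite /node_exponent; case: (ltnP i m); lia. Qed.

Lemma node_exponent_inj (m l : nat) : (m < l)%N -> injective (@node_exponent m l).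
Proof.
move=> m_lt_l i j; rewrite /node_exponent; have := ltn_ord i; have := ltn_ord j.
by case: (ltnP i m) => im; case: (ltnP j m) => jm j_lt i_lt e; apply: ord_inj; lia.
Qed.

Section Corollary.
Variables (F : finFieldType) (n : nat) (alpha : F) (b m t l : nat).
Hypotheses (alpha_prim : n.-primitive_root alpha) (b_coprime : coprime b n)
  (m_lt_l : (m < l)%N) (l_le : (l <= n - 2)%N).

Let m3_le_n : (m.+3 <= n)%N. Proof. by clear -m_lt_l l_le; lia. Qed.
Let l_lt_n : (l < n)%N. Proof. by clear -l_le m3_le_n; lia. Qed.

Let alpha_neq0 : alpha != 0.
Proof. by rewrite (prim_root_eq0 alpha_prim); have := m3_le_n; lia. Qed.

Definition node (i : 'I_m.+1) : F := alpha ^+ (t + node_exponent l i * b).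

Let gamma : F := alpha ^+ b.

Lemma gamma_prim : n.-primitive_root gamma.
Proof. by rewrite /gamma prim_root_exp_coprime. Qed.

Lemma gamma_pow_inj : injective (fun j : 'I_n => gamma ^+ j).
Proof.
move=> j1 j2 /eqP; rewrite (eq_prim_root_expr gamma_prim) !modn_small // => /eqP.
exact: val_inj.
Qed.

Lemma node_pow i (j : nat) : node i ^+ j = alpha ^+ (t * j) * (gamma ^+ j) ^+ node_exponent l i.
Proof.
rewrite /node /gamma -!exprM -exprD; congr (_ ^+ _).
by rewrite mulnDl; congr (_ + _); rewrite [(j * _)%N]mulnC mulnCA mulnA.
Qed.

Lemma node_inj : injective node.
Proof.
move=> i j /eqP; rewrite (eq_prim_root_expr alpha_prim) eqn_modDl.
rewrite -(eq_prim_root_expr alpha_prim) ![(_ * b)%N]mulnC !exprM -/gamma.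
rewrite (eq_prim_root_expr gamma_prim) !modn_small ?node_exponent_lt // => /eqP.
exact: (node_exponent_inj m_lt_l).
Qed.

Lemma node_unity i : node i ^+ n = 1.
Proof. by rewrite exprAC (prim_expr_order alpha_prim) expr1n. Qed.

Lemma node_lt : (m.+1 < n)%N.
Proof. exact: leq_trans (leqnSn m.+2) m3_le_n. Qed.

Lemma node_setE :
  [set alpha ^+ (t + i * b) | i : 'I_m] :|: [set alpha ^+ (t + l * b)] = node_set node.
Proof.
apply/setP => z; rewrite inE in_set1; apply/idP/imsetP.
  case/orP => [/imsetP[i _ ->]|/eqP ->].
    by exists (widen_ord (leqnSn m) i); rewrite // /node /node_exponent /= ltn_ord.
  by exists ord_max; rewrite // /node /node_exponent /= ltnn.
case=> i _ ->; rewrite /node /node_exponent; case: ltnP => [im|_]; last by rewrite eqxx orbT.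
by apply/orP; left; apply/imsetP; exists (Ordinal im).
Qed.

Local Notation C := (cyclic_code n (node_set node)).
Local Notation D := (dual_code C).

(* BCH bound: the nodes alpha^t gamma^i, i < m, are consecutive powers of
   gamma up to the factor alpha^t, so nonzero codewords have weight > m. *)
Lemma bch_distance : (m.+1 <= mindist C)%N.
Proof.
apply: mindist_ge => [|c cC]; first by have := m3_le_n; lia.
rewrite ltnNge; apply: contraNN => c_light.
have c_twisted := power_sums_vanish (x := fun j => c 0 j * alpha ^+ (t * j))
  (a := fun j => gamma ^+ j) (J := [set j | c 0 j != 0]) c_light.
apply/eqP/rowP => j; rewrite mxE.
have : c 0 j * alpha ^+ (t * j) = 0.
  apply: c_twisted => [j'|j1 j2 _ _ /gamma_pow_inj //|i im].
    by rewrite inE negbK => /eqP ->; rewrite mul0r.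
  move: cC; rewrite (mem_node_code node_unity node_lt).
  move=> /forallP/(_ (Ordinal (ltnW im : (i < m.+1)%N)))/eqP c_i.
  by rewrite -[RHS]c_i; apply: eq_bigr => j' _; rewrite node_pow /node_exponent /= im mulrA.
by move/eqP; rewrite mulf_eq0 expf_eq0 (negbTE alpha_neq0) andbF orbF => /eqP.
Qed.

Lemma check_row_sparse y (j : 'I_n) :
  check_row n node y 0 j = alpha ^+ (t * j) *
    ((\poly_(i < m) y 0 (inord i)).[gamma ^+ j] + y 0 ord_max * (gamma ^+ j) ^+ l).
Proof.
rewrite mxE big_ord_recr /= horner_poly mulrDr big_distrr /=; congr (_ + _).
  apply: eq_bigr => i _; rewrite node_pow /node_exponent /= ltn_ord mulrCA.
  by congr (_ * (y 0 _ * _)); apply: val_inj; rewrite /= inordK // leqW.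
by rewrite node_pow /node_exponent /= ltnn mulrCA.
Qed.

(* A nonzero check row vanishes at fewer than (n + m) / 2 positions, by the
   root count for sparse polynomials on the n-th roots of unity. *)
Lemma dual_weight_bound y : y != 0 -> (n + 1 <= m + 2 * wt (check_row n node y))%N.
Proof.
move=> y0; set v := check_row n node y; set P := \poly_(i < m) y 0 (inord i).
pose rs := [seq gamma ^+ val j | j <- enum (zero_set v)].
have urs : uniq rs.
  by rewrite map_inj_in_uniq ?enum_uniq // => j1 j2 _ _ /gamma_pow_inj ->.
have roots z : z \in rs -> z ^+ n = 1 /\ P.[z] + y 0 ord_max * z ^+ l = 0.
  case/mapP => j; rewrite mem_enum inE => vj ->.
  split; first by rewrite exprAC (prim_expr_order gamma_prim) expr1n.
  move: vj; rewrite /v check_row_sparse mulf_eq0 expf_eq0 (negbTE alpha_neq0) andbF.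
  by move=> /eqP.
have Py0 : P != 0 \/ y 0 ord_max != 0.
  have [P0|] := eqVneq P 0; [right | by left].
  apply: contra_neq y0 => ym0; apply/rowP => i; rewrite mxE.
  have [im|mi] := ltnP i m.
    by have := congr1 (fun q : {poly F} => q`_i) P0; rewrite coef_poly im coef0 inord_val.
  by rewrite -ym0; congr (y 0 _); apply: val_inj; have := ltn_ord i; rewrite /=; lia.
have := sparse_poly_roots (size_poly m _) (ltnW m_lt_l) l_lt_n urs roots Py0.
have size_rs : size rs = #|zero_set v| by rewrite size_map cardE.
by rewrite size_rs; have := wt_add_zeros v; lia.
Qed.

Lemma dual_distance_bound : (n + 1 <= m + 2 * mindist D)%N.
Proof.
have [v vD [v0 <-]] := node_dual_min_word node_inj node_unity node_lt (ltn0Sn m).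
have [y vy] := dual_is_check_rows node_inj node_unity node_lt vD.
rewrite vy dual_weight_bound //; apply: contra_neq v0 => y0.
by rewrite vy y0 check_row0.
Qed.

End Corollary.

Unset Implicit Arguments.

Theorem corollary4p6 (F : finFieldType) (n : nat) (alpha : F)
    (b m t l : nat) :
  (n %| #|F|.-1)%N ->
  n.-primitive_root alpha ->
  (1 <= b)%N -> (1 <= m)%N -> coprime b n ->
  (t < n)%N ->
  (m.+1 <= l)%N -> (l <= n - 2)%N ->
  let A : {set F} :=
    [set alpha ^+ (t + i * b) | i : 'I_m] :|: [set alpha ^+ (t + l * b)] in
  let CA := cyclic_code n A in
  optimal_LRC CA (mindist (dual_code CA)).-1 2.
Proof.
move=> _ prim _ _ cop _ m_lt_l l_le A CA; rewrite /CA /A node_setE.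
have inj : injective (node alpha b t l : 'I_m.+1 -> F) := node_inj prim cop m_lt_l l_le.
have unity (i : 'I_m.+1) : node alpha b t l i ^+ n = 1 := node_unity b t l prim i.
have k_lt_n := node_lt m_lt_l l_le.
have d_lb := bch_distance t prim cop m_lt_l l_le.
have d_ub := node_code_singleton inj unity k_lt_n.
have dd_lb := dual_distance_bound t prim cop m_lt_l l_le.
have mds := node_code_MDS_dual inj unity k_lt_n.
set C := cyclic_code n _ in d_lb d_ub dd_lb mds *.
split; first by apply: node_code_LRC inj unity k_lt_n _ _ => //; rewrite -/C; lia.
rewrite (node_code_dim inj unity k_lt_n); apply: lrc_bound_attained; [lia | lia |].
have [d_le|d_gt] := leqP (mindist C) m.+1; [right | left].
  by have := d_le; rewrite mds; split; lia.
by have := d_gt; rewrite ltnNge mds -ltnNge; split; lia.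
Qed.
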